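(* Assume $\tau_1+\tau_2=1$, parametrize $\tau_2=\frac12(1+\nu_1-\nu_2)$, $\tau_3=\nu_1\nu_2+\frac{(\alpha+\beta)(\nu_1+\nu_2-1)}{2}$, and assume $\alpha+\nu_1+\nu_2\notin\mathbb Z$. Set $\widetilde\alpha=-\alpha-\beta-\nu_1-\nu_2$, $\widetilde\beta=\beta$ and, for $n\ge0$, $\psi_n(x)=x^{\nu_2-1}\widehat P_n^{(\widetilde\alpha,\widetilde\beta)}(1/x)$ on $x\in(0,1)$. Then (i) $M\psi_n=\widetilde\lambda_n\psi_n$ with $\widetilde\lambda_n=n(n-1)+(2-\nu_1-\nu_2-\alpha)n+\tau_0+\nu_1\nu_2+\tfrac12(\alpha-1)(\nu_1+\nu_2-1)$; (ii) $L$ acts tridiagonally on $\{\psi_n\}$: for every $n\ge0$ there are constants $\xi_n,\eta_n,\zeta_n$ with $L\psi_n=\xi_n\psi_{n+1}+\eta_n\psi_n+\zeta_n\psi_{n-1}$ (where $\psi_{-1}:=0$).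
   Context: $L=x(1-x)\partial_x^2+\big(\alpha+1-(\alpha+\beta+2)x\big)\partial_x$ with real $\alpha,\beta$, $X$ is multiplication by $x$, and $M=\tau_1XL+\tau_2LX+\tau_3X+\tau_0$ with real $\tau_i$. For parameters $a,b$ with $a+b\notin\mathbb Z$, the monic Jacobi polynomial is $\widehat P_n^{(a,b)}(t)=\frac{(-1)^n(a+1)_n}{(n+a+b+1)_n}{}_2F_1(-n,n+a+b+1;a+1;t)$, where $(c)_n=c(c+1)\cdots(c+n-1)$; it is the monic degree-$n$ eigenpolynomial of $t(1-t)\partial_t^2+(a+1-(a+b+2)t)\partial_t$ with eigenvalue $-n(n+a+b+1)$. *)

From Stdlib Require Import Reals Lra Lia ZArith.
Open Scope R_scope.

Fixpoint poch (c : R) (n : nat) : R :=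
  match n with
  | O => 1
  | S m => poch c m * (c + INR m)
  end.

(* Coefficient of t^k in the monic Jacobi polynomial hat P_n^(a,b)(t):
   (-1)^n (a+1)_n/(n+a+b+1)_n * (-n)_k (n+a+b+1)_k / ((a+1)_k k!),
   written with (a+1)_n/(a+1)_k = (a+1+k)_(n-k). *)
Definition jacobi_coef (n : nat) (a b : R) (k : nat) : R :=
  (-1) ^ n * poch (a + 1 + INR k) (n - k) * poch (- INR n) k
  * poch (INR n + a + b + 1) k / (poch (INR n + a + b + 1) n * INR (fact k)).

Definition monic_jacobi (n : nat) (a b t : R) : R :=
  sum_f_R0 (fun k => jacobi_coef n a b k * t ^ k) n.

(* Lrel al be f g : on (0,1), f is twice differentiable and
   g = L f, where L = x(1-x) d^2/dx^2 + (al+1-(al+be+2)x) d/dx. *)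
Definition Lrel (al be : R) (f g : R -> R) : Prop :=
  exists f1 f2 : R -> R,
    forall x, 0 < x < 1 ->
      derivable_pt_lim f x (f1 x) /\
      derivable_pt_lim f1 x (f2 x) /\
      g x = x * (1 - x) * f2 x + (al + 1 - (al + be + 2) * x) * f1 x.

Definition psi (al be nu1 nu2 : R) (n : nat) (x : R) : R :=
  Rpower x (nu2 - 1) * monic_jacobi n (- al - be - nu1 - nu2) be (/ x).

From Stdlib Require Import Reals Lra Lia ZArith.
Open Scope R_scope.

(* On (0,1), psi_n(x) = sum_k c_k x^(s-k) with s = nu2 - 1 and c_k the coefficients of
   the monic Jacobi polynomial P_n with parameters (a, be), a = -al-be-nu1-nu2.  Since
   L x^q = q (q + al) x^(q-1) - q (q + al + be + 1) x^q, both claims are identities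
   between coefficient sequences.  For (i), the relations between the tau_i make
   tau1 X L + tau2 L X + tau3 X collapse, coefficient by coefficient, onto the Jacobi
   differential equation J P_n = mu_n P_n.  For (ii), in the variable t = 1/x the
   operator L is a combination of t, J t, t J and 1; as J is diagonal on the P_n and
   multiplication by t is tridiagonal (three-term recurrence), so is L.  The hypothesis
   al + nu1 + nu2 not in Z says that a + be is not a nonpositive integer, which keeps
   every Pochhammer denominator nonzero. *)

Lemma poch_S_l c m : poch c (S m) = c * poch (c + 1) m.
Proof.
  revert c; induction m as [|m IH]; intro c.
  - simpl. ring.
  - transitivity (poch c (S m) * (c + INR (S m))); [reflexivity|].
    rewrite IH, S_INR. simpl. ring.
Qed.

Lemma poch_shift c k : poch c k * (c + INR k) = c * poch (c + 1) k.
Proof. rewrite <- poch_S_l. reflexivity. Qed.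

Lemma poch_succ_S c d :
  poch (c + 1) (S d) * c = poch c d * (c + INR d) * (c + INR d + 1).
Proof.
  rewrite Rmult_comm, <- poch_S_l.
  transitivity (poch c (S d) * (c + INR (S d))); [reflexivity|].
  rewrite S_INR. simpl. ring.
Qed.

Lemma poch_add c p q : poch c (p + q) = poch c p * poch (c + INR p) q.
Proof.
  induction q as [|q IH].
  - rewrite Nat.add_0_r. simpl. ring.
  - rewrite Nat.add_succ_r. simpl. rewrite IH, plus_INR. ring.
Qed.

Lemma poch_neq0 c m : (forall i, (i < m)%nat -> c + INR i <> 0) -> poch c m <> 0.
Proof.
  induction m as [|m IH]; intro H; simpl.
  - lra.
  - apply Rmult_integral_contrapositive_currified.
    + apply IH. intros; apply H; lia.
    + apply H; lia.
Qed.

Lemma poch_opp_INR_gt n k : (n < k)%nat -> poch (- INR n) k = 0.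
Proof.
  intro H. replace k with (S n + (k - S n))%nat by lia.
  rewrite poch_add. simpl. rewrite Rplus_opp_l. ring.
Qed.

Lemma poch_opp_INR_diag n : poch (- INR n) n = (-1) ^ n * INR (fact n).
Proof.
  induction n as [|n IH].
  - simpl. ring.
  - rewrite poch_S_l. replace (- INR (S n) + 1) with (- INR n) by (rewrite S_INR; ring).
    rewrite IH, fact_simpl, mult_INR, S_INR. simpl. ring.
Qed.

Lemma eq_div_of_mul x y d : d <> 0 -> x * d = y -> x = y / d.
Proof. intros Hd <-. field. exact Hd. Qed.

Definition not_nonpos_int (x : R) : Prop := forall j : nat, x + INR j <> 0.

Lemma not_nonpos_int_neq0 x y j : not_nonpos_int x -> y = x + INR j -> y <> 0.
Proof. intros H ->. apply H. Qed.

Lemma poch_not_nonpos_int_neq0 x c j m : not_nonpos_int x -> c = x + INR j -> poch c m <> 0.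
Proof.
  intros H ->. apply poch_neq0. intros i _.
  rewrite Rplus_assoc, <- plus_INR. apply H.
Qed.

Ltac nat_shift := rewrite ?S_INR, ?plus_INR, ?mult_INR; simpl; ring.

Ltac nonzero_shift H j := apply (not_nonpos_int_neq0 _ _ j H); nat_shift.

Ltac poch_nonzero_shift H j := apply (poch_not_nonpos_int_neq0 _ _ j _ H); nat_shift.

Definition jacobi_op_coef (a b : R) (w : nat -> R) (k : nat) : R :=
  (INR k + 1) * (INR k + 1 + a) * w (S k) - INR k * (INR k + a + b + 1) * w k.

Definition jacobi_eigen (a b m : R) : R := - (m * (m + a + b + 1)).

Definition shift_coef (w : nat -> R) (k : nat) : R :=
  match k with O => 0 | S i => w i end.

Definition jacobi_coef_pred (n : nat) (a b : R) : nat -> R :=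
  match n with O => fun _ => 0 | S m => jacobi_coef m a b end.

Definition jacobi_B (a b n : R) : R :=
  / 2 - (b * b - a * a) / (2 * (2 * n + a + b) * (2 * n + a + b + 2)).

Definition jacobi_G (a b n : R) : R :=
  n * (n + a) * (n + b) * (n + a + b)
  / ((2 * n + a + b) ^ 2 * (2 * n + a + b + 1) * (2 * n + a + b - 1)).

Lemma jacobi_op_coef_ext a b u v k : (forall j, u j = v j) ->
  jacobi_op_coef a b u k = jacobi_op_coef a b v k.
Proof. intro H. unfold jacobi_op_coef. rewrite !H. reflexivity. Qed.

Lemma jacobi_op_coef_lin3 a b u v w p q k :
  jacobi_op_coef a b (fun j => u j + p * v j + q * w j) k
  = jacobi_op_coef a b u k + p * jacobi_op_coef a b v k + q * jacobi_op_coef a b w k.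
Proof. unfold jacobi_op_coef. ring. Qed.

Section JacobiCoefficients.

Variables a b : R.
Hypothesis Hab : not_nonpos_int (a + b).

Lemma jacobi_coef_gt n k : (n < k)%nat -> jacobi_coef n a b k = 0.
Proof. intro H. unfold jacobi_coef. rewrite poch_opp_INR_gt by exact H. unfold Rdiv. ring. Qed.

Lemma jacobi_coef_diag n : jacobi_coef n a b n = 1.
Proof.
  unfold jacobi_coef. rewrite Nat.sub_diag, poch_opp_INR_diag. simpl poch.
  assert (poch (INR n + a + b + 1) n <> 0)
    by poch_nonzero_shift Hab (n + 1)%nat.
  pose proof (INR_fact_neq_0 n).
  transitivity ((-1) ^ n * (-1) ^ n); [field; split; assumption|].
  rewrite <- Rpow_mult_distr. replace (-1 * -1) with 1 by ring. apply pow1.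
Qed.

Lemma jacobi_coef_closed n k : (k <= n)%nat ->
  jacobi_coef n a b k = (-1) ^ n * poch (a + 1 + INR k) (n - k) * poch (- INR n) k
     / (poch (INR n + a + b + 1 + INR k) (n - k) * INR (fact k)).
Proof.
  intro Hk. unfold jacobi_coef.
  replace (poch (INR n + a + b + 1) n) with (poch (INR n + a + b + 1) (k + (n - k)))
    by (f_equal; lia).
  rewrite poch_add.
  assert (poch (INR n + a + b + 1) k <> 0)
    by poch_nonzero_shift Hab (n + 1)%nat.
  assert (poch (INR n + a + b + 1 + INR k) (n - k) <> 0)
    by poch_nonzero_shift Hab (n + 1 + k)%nat.
  pose proof (INR_fact_neq_0 k).
  field. repeat split; assumption.
Qed.

Lemma jacobi_coef_rec_k n k : (k <= n)%nat ->
  (INR k + 1) * (INR k + 1 + a) * jacobi_coef n a b (S k)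
  = - (INR n - INR k) * (INR n + INR k + a + b + 1) * jacobi_coef n a b k.
Proof.
  intro Hk. destruct (Nat.eq_dec k n) as [->|Hne].
  { rewrite jacobi_coef_gt by lia. ring. }
  rewrite !jacobi_coef_closed by lia.
  replace (n - k)%nat with (S (n - S k)) by lia.
  rewrite (poch_S_l (a + 1 + INR k)), (poch_S_l (INR n + a + b + 1 + INR k)),
    fact_simpl, mult_INR, !S_INR.
  change (poch (- INR n) (S k)) with (poch (- INR n) k * (- INR n + INR k)).
  replace (a + 1 + (INR k + 1)) with (a + 1 + INR k + 1) by ring.
  replace (INR n + a + b + 1 + (INR k + 1)) with (INR n + a + b + 1 + INR k + 1) by ring.
  assert (poch (INR n + a + b + 1 + INR k + 1) (n - S k) <> 0)
    by poch_nonzero_shift Hab (n + 1 + k + 1)%nat.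
  assert (INR n + a + b + 1 + INR k <> 0)
    by nonzero_shift Hab (n + 1 + k)%nat.
  pose proof (INR_fact_neq_0 k).
  assert (INR k + 1 <> 0) by (pose proof (pos_INR k); lra).
  field. repeat split; assumption.
Qed.

Lemma jacobi_coef_rec_n n k : (k <= n)%nat ->
  (INR n + 1 - INR k) * (2 * INR n + a + b + 1) * (2 * INR n + a + b + 2)
    * jacobi_coef (S n) a b k
  = - (INR n + 1) * (a + INR n + 1) * (INR n + a + b + 1 + INR k) * jacobi_coef n a b k.
Proof.
  intro Hk. rewrite !jacobi_coef_closed by lia.
  replace (S n - k)%nat with (S (n - k)) by lia.
  set (d := (n - k)%nat).
  set (M := INR n + a + b + 1 + INR k).
  assert (Ed : INR d = INR n - INR k) by (apply minus_INR; exact Hk).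
  assert (HM : M <> 0) by (unfold M; nonzero_shift Hab (n + 1 + k)%nat).
  assert (HMd : M + INR d <> 0)
    by (unfold M; rewrite Ed; nonzero_shift Hab (2 * n + 1)%nat).
  assert (HMd1 : M + INR d + 1 <> 0)
    by (unfold M; rewrite Ed; nonzero_shift Hab (2 * n + 2)%nat).
  assert (Hk1 : - INR (S n) + INR k <> 0) by (apply le_INR in Hk; rewrite S_INR; lra).
  assert (E1 : poch (a + 1 + INR k) (S d) = poch (a + 1 + INR k) d * (a + INR n + 1)).
  { simpl. rewrite Ed. ring. }
  assert (E2 : poch (- INR (S n)) k = - INR (S n) * poch (- INR n) k / (- INR (S n) + INR k)).
  { apply eq_div_of_mul; [exact Hk1|]. rewrite poch_shift.
    replace (- INR (S n) + 1) with (- INR n) by (rewrite S_INR; ring). reflexivity. }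
  assert (E3 : poch (INR (S n) + a + b + 1 + INR k) (S d)
               = poch M d * (M + INR d) * (M + INR d + 1) / M).
  { replace (INR (S n) + a + b + 1 + INR k) with (M + 1) by (unfold M; rewrite S_INR; ring).
    apply eq_div_of_mul; [exact HM|]. apply poch_succ_S. }
  rewrite E1, E2, E3.
  assert (poch M d <> 0)
    by (unfold M; poch_nonzero_shift Hab (n + 1 + k)%nat).
  pose proof (INR_fact_neq_0 k).
  replace (2 * INR n + a + b + 1) with (M + INR d) by (unfold M; rewrite Ed; ring).
  replace (2 * INR n + a + b + 2) with (M + INR d + 1) by (unfold M; rewrite Ed; ring).
  fold M. rewrite S_INR in *. simpl pow.
  field. repeat split; assumption.
Qed.

Lemma jacobi_coef_succ_n n k : (k <= n)%nat ->
  jacobi_coef (S n) a b k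
  = - (INR n + 1) * (a + INR n + 1) * (INR n + a + b + 1 + INR k) * jacobi_coef n a b k
    / ((INR n + 1 - INR k) * (2 * INR n + a + b + 1) * (2 * INR n + a + b + 2)).
Proof.
  intro Hk. apply eq_div_of_mul.
  - repeat apply Rmult_integral_contrapositive_currified.
    + apply le_INR in Hk. lra.
    + nonzero_shift Hab (2 * n + 1)%nat.
    + nonzero_shift Hab (2 * n + 2)%nat.
  - rewrite <- jacobi_coef_rec_n by exact Hk. ring.
Qed.

Lemma jacobi_coef_pred_k n k : (k < n)%nat ->
  jacobi_coef n a b k
  = - (INR k + 1) * (INR k + 1 + a) * jacobi_coef n a b (S k)
    / ((INR n - INR k) * (INR n + INR k + a + b + 1)).
Proof.
  intro Hk. apply eq_div_of_mul.
  - apply Rmult_integral_contrapositive_currified.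
    + apply lt_INR in Hk. lra.
    + nonzero_shift Hab (n + k + 1)%nat.
  - rewrite Ropp_mult_distr_l_reverse, Ropp_mult_distr_l_reverse, jacobi_coef_rec_k by lia.
    ring.
Qed.

Lemma jacobi_op_coef_jacobi n k :
  jacobi_op_coef a b (jacobi_coef n a b) k = jacobi_eigen a b (INR n) * jacobi_coef n a b k.
Proof.
  unfold jacobi_op_coef, jacobi_eigen.
  destruct (le_lt_dec k n) as [Hk|Hk].
  - rewrite jacobi_coef_rec_k by assumption. ring.
  - rewrite !jacobi_coef_gt by lia. ring.
Qed.

Lemma jacobi_op_coef_pred n k :
  jacobi_op_coef a b (jacobi_coef_pred n a b) k
  = jacobi_eigen a b (INR n - 1) * jacobi_coef_pred n a b k.
Proof.
  destruct n as [|m]; simpl jacobi_coef_pred.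
  - unfold jacobi_op_coef. ring.
  - rewrite jacobi_op_coef_jacobi, S_INR. f_equal. f_equal. ring.
Qed.

Lemma jacobi_coef_three_term_lt n k : (k < n)%nat ->
  shift_coef (jacobi_coef n a b) k
  = jacobi_coef (S n) a b k + jacobi_B a b (INR n) * jacobi_coef n a b k
    + jacobi_G a b (INR n) * jacobi_coef_pred n a b k.
Proof.
  intro Hlt. destruct n as [|m]; [lia|]. simpl jacobi_coef_pred.
  rewrite (jacobi_coef_succ_n (S m) k), (jacobi_coef_succ_n m k) by lia.
  assert (2 * (INR m + 1) + a + b - 1 <> 0) by nonzero_shift Hab (2 * m + 1)%nat.
  assert (2 * (INR m + 1) + a + b <> 0) by nonzero_shift Hab (2 * m + 2)%nat.
  assert (2 * (INR m + 1) + a + b + 1 <> 0) by nonzero_shift Hab (2 * m + 3)%nat.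
  assert (2 * (INR m + 1) + a + b + 2 <> 0) by nonzero_shift Hab (2 * m + 4)%nat.
  pose proof (pos_INR m). pose proof (lt_INR _ _ Hlt) as HltR. rewrite S_INR in HltR.
  destruct k as [|i]; simpl shift_coef.
  - unfold jacobi_B, jacobi_G. rewrite !S_INR. simpl INR.
    field. repeat split; first [assumption | lra].
  - rewrite (jacobi_coef_pred_k (S m) i), (jacobi_coef_succ_n m (S i)) by lia.
    assert (INR m + 1 + INR i + a + b + 1 <> 0) by nonzero_shift Hab (m + i + 2)%nat.
    unfold jacobi_B, jacobi_G. rewrite !S_INR in *.
    field. repeat split; first [assumption | lra].
Qed.

(* The three-term recurrence t P_n = P_(n+1) + B_n P_n + G_n P_(n-1) of the monic
   Jacobi polynomials, read on coefficients. *)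
Lemma jacobi_coef_three_term n k :
  shift_coef (jacobi_coef n a b) k
  = jacobi_coef (S n) a b k + jacobi_B a b (INR n) * jacobi_coef n a b k
    + jacobi_G a b (INR n) * jacobi_coef_pred n a b k.
Proof.
  destruct (lt_eq_lt_dec k n) as [[Hlt|<-]|Hgt].
  - apply jacobi_coef_three_term_lt, Hlt.
  - rewrite jacobi_coef_diag, (jacobi_coef_succ_n k k), jacobi_coef_diag by lia.
    destruct k as [|m]; simpl shift_coef; simpl jacobi_coef_pred.
    + assert (a + b <> 0) by nonzero_shift Hab 0%nat.
      assert (a + b + 1 <> 0) by nonzero_shift Hab 1%nat.
      assert (a + b + 2 <> 0) by nonzero_shift Hab 2%nat.
      unfold jacobi_B. simpl INR. field. repeat split; assumption.
    + rewrite (jacobi_coef_pred_k (S m) m), jacobi_coef_diag, jacobi_coef_gt by lia.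
      assert (2 * INR (S m) + a + b <> 0) by nonzero_shift Hab (2 * m + 2)%nat.
      assert (2 * INR (S m) + a + b + 1 <> 0) by nonzero_shift Hab (2 * m + 3)%nat.
      assert (2 * INR (S m) + a + b + 2 <> 0) by nonzero_shift Hab (2 * m + 4)%nat.
      assert (INR m + 1 + INR m + a + b + 1 <> 0) by nonzero_shift Hab (2 * m + 2)%nat.
      unfold jacobi_B. rewrite !S_INR in *.
      field. repeat split; first [assumption | lra].
  - destruct k as [|i]; [lia|]. simpl shift_coef.
    assert (Hpred : jacobi_coef_pred n a b (S i) = 0)
      by (destruct n; [reflexivity | apply jacobi_coef_gt; lia]).
    rewrite Hpred, (jacobi_coef_gt n (S i)) by lia.
    destruct (Nat.eq_dec i n) as [->|Hne].
    + rewrite !jacobi_coef_diag. ring.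
    + rewrite !jacobi_coef_gt by lia. ring.
Qed.

End JacobiCoefficients.

Lemma derivable_pt_lim_scal_Rpower c q x : 0 < x ->
  derivable_pt_lim (fun y => c * Rpower y q) x (c * q * Rpower x (q - 1)).
Proof.
  intro Hx. rewrite Rmult_assoc.
  apply (derivable_pt_lim_scal (fun y => Rpower y q)), derivable_pt_lim_power, Hx.
Qed.

Definition pow_sum (r : R) (w : nat -> R) (N : nat) (x : R) : R :=
  sum_f_R0 (fun k => w k * Rpower x (r - INR k)) N.

Section PowerSums.

Variable r : R.

Lemma derivable_pt_lim_pow_sum w N x : 0 < x ->
  derivable_pt_lim (pow_sum r w N) x (pow_sum (r - 1) (fun k => w k * (r - INR k)) N x).
Proof.
  intro Hx. unfold pow_sum.
  induction N as [|N IH]; cbn [sum_f_R0].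
  - replace (r - 1 - INR 0) with (r - INR 0 - 1) by ring.
    apply derivable_pt_lim_scal_Rpower, Hx.
  - replace (r - 1 - INR (S N)) with (r - INR (S N) - 1) by ring.
    apply (derivable_pt_lim_plus
             (fun y => sum_f_R0 (fun k => w k * Rpower y (r - INR k)) N)
             (fun y => w (S N) * Rpower y (r - INR (S N)))).
    + exact IH.
    + apply derivable_pt_lim_scal_Rpower, Hx.
Qed.

Lemma pow_sum_mult_x w N x : 0 < x -> x * pow_sum r w N x = pow_sum (r + 1) w N x.
Proof.
  intro Hx. unfold pow_sum. rewrite scal_sum. apply sum_eq. intros i _.
  replace (r + 1 - INR i) with ((r - INR i) + 1) by ring.
  rewrite Rpower_plus, Rpower_1 by exact Hx. ring.
Qed.

Lemma pow_sum_shift w N x : pow_sum (r - 1) w N x = pow_sum r (shift_coef w) (S N) x.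
Proof.
  unfold pow_sum. rewrite (decomp_sum _ (S N)) by lia. simpl shift_coef. simpl pred.
  rewrite Rmult_0_l, Rplus_0_l. apply sum_eq. intros i _.
  rewrite S_INR. f_equal. f_equal. ring.
Qed.

Lemma pow_sum_pad w N M x : (N <= M)%nat -> (forall k, (N < k <= M)%nat -> w k = 0) ->
  pow_sum r w N x = pow_sum r w M x.
Proof.
  intros H Hz. induction H as [|M H IH]; [reflexivity|].
  unfold pow_sum in *. cbn [sum_f_R0].
  rewrite <- IH by (intros; apply Hz; lia). rewrite Hz by lia. ring.
Qed.

Lemma pow_sum_ext u v N x : (forall k, (k <= N)%nat -> u k = v k) ->
  pow_sum r u N x = pow_sum r v N x.
Proof. intro H. unfold pow_sum. apply sum_eq. intros i Hi. rewrite H by exact Hi. reflexivity. Qed.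

Lemma pow_sum_add u v N x :
  pow_sum r u N x + pow_sum r v N x = pow_sum r (fun k => u k + v k) N x.
Proof. unfold pow_sum. rewrite <- plus_sum. apply sum_eq. intros; ring. Qed.

Lemma pow_sum_scal c u N x : c * pow_sum r u N x = pow_sum r (fun k => c * u k) N x.
Proof. unfold pow_sum. rewrite scal_sum. apply sum_eq. intros; ring. Qed.

End PowerSums.

Definition L_coef (al be r : R) (w : nat -> R) (k : nat) : R :=
  shift_coef (fun i => w i * ((r - INR i) * (r - INR i + al))) k
  - w k * ((r - INR k) * (r - INR k + al + be + 1)).

Lemma L_pow_sum al be r w N x : 0 < x -> w (S N) = 0 ->
  x * (1 - x) * pow_sum (r - 1 - 1) (fun k => w k * (r - INR k) * (r - 1 - INR k)) N x
  + (al + 1 - (al + be + 2) * x) * pow_sum (r - 1) (fun k => w k * (r - INR k)) N x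
  = pow_sum r (L_coef al be r w) (S N) x.
Proof.
  intros Hx Hz.
  transitivity (pow_sum (r - 1) (fun i => w i * ((r - INR i) * (r - INR i + al))) N x
                - pow_sum r (fun i => w i * ((r - INR i) * (r - INR i + al + be + 1))) N x).
  - unfold pow_sum. rewrite !scal_sum, <- plus_sum, <- minus_sum. apply sum_eq. intros i _.
    replace (r - 1 - INR i) with ((r - 1 - 1 - INR i) + 1) by ring.
    replace (r - INR i) with (((r - 1 - 1 - INR i) + 1) + 1) by ring.
    rewrite !Rpower_plus, !Rpower_1 by exact Hx. ring.
  - rewrite pow_sum_shift, (pow_sum_pad r _ N (S N)) by (try lia; intros k Hk;
      replace k with (S N) by lia; rewrite Hz; ring).
    unfold pow_sum, L_coef. rewrite <- minus_sum. apply sum_eq. intros; ring.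
Qed.

Lemma Lrel_pow_sum al be r w N f : (forall y, 0 < y -> f y = pow_sum r w N y) ->
  w (S N) = 0 -> Lrel al be f (pow_sum r (L_coef al be r w) (S N)).
Proof.
  intros Hf Hz.
  exists (pow_sum (r - 1) (fun k => w k * (r - INR k)) N),
         (pow_sum (r - 1 - 1) (fun k => w k * (r - INR k) * (r - 1 - INR k)) N).
  intros x Hx. split; [|split].
  - apply (derivable_pt_lim_locally_ext (pow_sum r w N) f x 0 (x + 1)); [lra| |].
    + intros z Hz'. symmetry. apply Hf. lra.
    + apply derivable_pt_lim_pow_sum. lra.
  - apply derivable_pt_lim_pow_sum. lra.
  - symmetry. apply L_pow_sum; [lra | exact Hz].
Qed.

Lemma psi_pow_sum al be nu1 nu2 n y : 0 < y ->
  psi al be nu1 nu2 n y = pow_sum (nu2 - 1) (jacobi_coef n (- al - be - nu1 - nu2) be) n y.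
Proof.
  intro Hy. unfold psi, monic_jacobi, pow_sum. rewrite scal_sum. apply sum_eq. intros i _.
  replace (nu2 - 1 - INR i) with ((nu2 - 1) + - INR i) by ring.
  rewrite Rpower_plus, Rpower_Ropp, Rpower_pow, pow_inv by exact Hy. ring.
Qed.

Definition kappa_jt (a be s al : R) : R := (a + be + 1 + 2 * s + al) / 2.
Definition kappa_tj (a be s al : R) : R := - 1 - kappa_jt a be s al.
Definition kappa_t (a be s al : R) : R := s * (s + al) + kappa_jt a be s al * (a + be + 2).
Definition kappa_1 (a be s al : R) : R :=
  - (s * (s + al + be + 1)) - kappa_jt a be s al * (1 + a).

(* With t = 1/x and J the Jacobi operator in t with parameters (a, be), for any a:
   L (x^s P(1/x)) = x^s (kappa_t t P + kappa_jt J (t P) + kappa_tj t (J P) + kappa_1 P). *)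
Lemma L_coef_decomp a al be s w k :
  L_coef al be s w k
  = kappa_t a be s al * shift_coef w k
    + kappa_jt a be s al * jacobi_op_coef a be (shift_coef w) k
    + kappa_tj a be s al * shift_coef (jacobi_op_coef a be w) k
    + kappa_1 a be s al * w k.
Proof.
  unfold L_coef, kappa_t, kappa_tj, kappa_1, kappa_jt, jacobi_op_coef.
  destruct k as [|i]; simpl shift_coef; rewrite ?S_INR; simpl INR; field.
Qed.

Definition tri_xi (a be s al n : R) : R :=
  kappa_t a be s al + kappa_jt a be s al * jacobi_eigen a be (n + 1)
  + kappa_tj a be s al * jacobi_eigen a be n.

Definition tri_eta (a be s al n : R) : R :=
  (kappa_t a be s al + (kappa_jt a be s al + kappa_tj a be s al) * jacobi_eigen a be n)
    * jacobi_B a be n + kappa_1 a be s al.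

Definition tri_zeta (a be s al n : R) : R :=
  (kappa_t a be s al + kappa_jt a be s al * jacobi_eigen a be (n - 1)
   + kappa_tj a be s al * jacobi_eigen a be n) * jacobi_G a be n.

Lemma L_coef_jacobi a al be s n k : not_nonpos_int (a + be) ->
  L_coef al be s (jacobi_coef n a be) k
  = tri_xi a be s al (INR n) * jacobi_coef (S n) a be k
    + tri_eta a be s al (INR n) * jacobi_coef n a be k
    + tri_zeta a be s al (INR n) * jacobi_coef_pred n a be k.
Proof.
  intro Hab. rewrite (L_coef_decomp a).
  assert (Eshift : shift_coef (jacobi_op_coef a be (jacobi_coef n a be)) k
                   = jacobi_eigen a be (INR n) * shift_coef (jacobi_coef n a be) k).
  { destruct k as [|i]; simpl; [ring | apply jacobi_op_coef_jacobi, Hab]. }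
  rewrite Eshift, (jacobi_op_coef_ext _ _ _ _ _ (jacobi_coef_three_term _ _ Hab n)).
  rewrite jacobi_op_coef_lin3, !jacobi_op_coef_jacobi, jacobi_op_coef_pred by exact Hab.
  rewrite jacobi_coef_three_term by exact Hab.
  unfold tri_xi, tri_eta, tri_zeta. rewrite S_INR. ring.
Qed.

Definition M_eigen (al nu1 nu2 tau0 n : R) : R :=
  n * (n - 1) + (2 - nu1 - nu2 - al) * n + tau0 + nu1 * nu2 + (al - 1) * (nu1 + nu2 - 1) / 2.

Lemma M_coef_jacobi al be nu1 nu2 tau0 tau1 tau2 tau3 n k :
  tau1 + tau2 = 1 -> tau2 = (1 + nu1 - nu2) / 2 ->
  tau3 = nu1 * nu2 + (al + be) * (nu1 + nu2 - 1) / 2 ->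
  not_nonpos_int ((- al - be - nu1 - nu2) + be) ->
  let c := jacobi_coef n (- al - be - nu1 - nu2) be in
  tau1 * L_coef al be (nu2 - 1) c k + tau2 * L_coef al be (nu2 - 1 + 1) c k
  + tau3 * c k + tau0 * shift_coef c k
  = M_eigen al nu1 nu2 tau0 (INR n) * shift_coef c k.
Proof.
  intros Htau12 Htau2 Htau3 Hab c.
  replace tau1 with (1 - tau2) by lra. subst tau2 tau3.
  unfold L_coef, M_eigen. destruct k as [|i]; simpl shift_coef.
  - simpl INR. field.
  - (* The two sides differ by the Jacobi equation at index i. *)
    transitivity (M_eigen al nu1 nu2 tau0 (INR n) * c i
       - (jacobi_op_coef (- al - be - nu1 - nu2) be c i
          - jacobi_eigen (- al - be - nu1 - nu2) be (INR n) * c i)).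
    + unfold M_eigen, jacobi_op_coef, jacobi_eigen. rewrite S_INR. field.
    + unfold c. rewrite jacobi_op_coef_jacobi by exact Hab. unfold M_eigen. ring.
Qed.

Lemma pow_sum_jacobi_pad r n N a b y : (n <= N)%nat ->
  pow_sum r (jacobi_coef n a b) n y = pow_sum r (jacobi_coef n a b) N y.
Proof. intro H. apply pow_sum_pad; [exact H | intros; apply jacobi_coef_gt; lia]. Qed.

Section Psi.

Variables al be nu1 nu2 : R.

Let a := - al - be - nu1 - nu2.
Let s := nu2 - 1.

Hypothesis Hab : not_nonpos_int (a + be).

Definition L_psi (n : nat) : R -> R :=
  pow_sum s (L_coef al be s (jacobi_coef n a be)) (S n).

Definition L_x_psi (n : nat) : R -> R :=
  pow_sum (s + 1) (L_coef al be (s + 1) (jacobi_coef n a be)) (S n).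

Lemma Lrel_psi n : Lrel al be (psi al be nu1 nu2 n) (L_psi n).
Proof.
  apply Lrel_pow_sum; [|apply jacobi_coef_gt; lia].
  intros y Hy. apply psi_pow_sum, Hy.
Qed.

Lemma Lrel_x_psi n : Lrel al be (fun x => x * psi al be nu1 nu2 n x) (L_x_psi n).
Proof.
  apply Lrel_pow_sum; [|apply jacobi_coef_gt; lia].
  intros y Hy. rewrite psi_pow_sum by exact Hy. apply pow_sum_mult_x, Hy.
Qed.

Lemma M_psi tau0 tau1 tau2 tau3 n x :
  tau1 + tau2 = 1 -> tau2 = (1 + nu1 - nu2) / 2 ->
  tau3 = nu1 * nu2 + (al + be) * (nu1 + nu2 - 1) / 2 -> 0 < x ->
  tau1 * (x * L_psi n x) + tau2 * L_x_psi n x + tau3 * (x * psi al be nu1 nu2 n x)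
    + tau0 * psi al be nu1 nu2 n x
  = M_eigen al nu1 nu2 tau0 (INR n) * psi al be nu1 nu2 n x.
Proof.
  intros Htau12 Htau2 Htau3 Hx. unfold L_psi, L_x_psi.
  rewrite psi_pow_sum, !pow_sum_mult_x by exact Hx. fold a s.
  assert (Eshift : pow_sum s (jacobi_coef n a be) n x
                   = pow_sum (s + 1) (shift_coef (jacobi_coef n a be)) (S n) x)
    by (rewrite <- pow_sum_shift; f_equal; ring).
  rewrite Eshift, (pow_sum_jacobi_pad _ n (S n)) by lia.
  rewrite !pow_sum_scal, !pow_sum_add. apply pow_sum_ext. intros k _.
  apply M_coef_jacobi; assumption.
Qed.

Lemma L_psi_tridiag n x : 0 < x ->
  L_psi n x
  = tri_xi a be s al (INR n) * psi al be nu1 nu2 (S n) x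
    + tri_eta a be s al (INR n) * psi al be nu1 nu2 n x
    + tri_zeta a be s al (INR n) * pow_sum s (jacobi_coef_pred n a be) (S n) x.
Proof.
  intro Hx. unfold L_psi. rewrite !psi_pow_sum, (pow_sum_jacobi_pad _ n (S n)) by (lia || lra).
  fold a s. rewrite !pow_sum_scal, !pow_sum_add. apply pow_sum_ext. intros k _.
  apply L_coef_jacobi, Hab.
Qed.

Lemma pow_sum_jacobi_coef_pred n x : 0 < x ->
  pow_sum s (jacobi_coef_pred n a be) (S n) x
  = match n with O => 0 | S m => psi al be nu1 nu2 m x end.
Proof.
  intro Hx. destruct n as [|m]; simpl jacobi_coef_pred.
  - unfold pow_sum. simpl. ring.
  - rewrite psi_pow_sum, (pow_sum_jacobi_pad _ m (S (S m))) by (lia || lra). reflexivity.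
Qed.

End Psi.

Theorem mainTheorem5
  (al be nu1 nu2 tau0 tau1 tau2 tau3 : R)
  (Htau12 : tau1 + tau2 = 1)
  (Htau2 : tau2 = (1 + nu1 - nu2) / 2)
  (Htau3 : tau3 = nu1 * nu2 + (al + be) * (nu1 + nu2 - 1) / 2)
  (Hnint : forall z : Z, al + nu1 + nu2 <> IZR z) :
  (forall n : nat,
     exists gL gLX : R -> R,
       Lrel al be (psi al be nu1 nu2 n) gL /\
       Lrel al be (fun x => x * psi al be nu1 nu2 n x) gLX /\
       forall x, 0 < x < 1 ->
         tau1 * (x * gL x) + tau2 * gLX x + tau3 * (x * psi al be nu1 nu2 n x)
           + tau0 * psi al be nu1 nu2 n x
         = (INR n * (INR n - 1) + (2 - nu1 - nu2 - al) * INR n + tau0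
            + nu1 * nu2 + (al - 1) * (nu1 + nu2 - 1) / 2)
           * psi al be nu1 nu2 n x) /\
  (forall n : nat,
     exists xi eta zeta : R, exists gL : R -> R,
       Lrel al be (psi al be nu1 nu2 n) gL /\
       forall x, 0 < x < 1 ->
         gL x = xi * psi al be nu1 nu2 (S n) x + eta * psi al be nu1 nu2 n x
                + (match n with
                   | O => 0
                   | S m => zeta * psi al be nu1 nu2 m x
                   end)).
Proof.
  assert (Hab : not_nonpos_int ((- al - be - nu1 - nu2) + be)).
  { intro j. specialize (Hnint (Z.of_nat j)). rewrite <- INR_IZR_INZ in Hnint. lra. }
  split; intro n.
  - exists (L_psi al be nu1 nu2 n), (L_x_psi al be nu1 nu2 n).
    split; [apply Lrel_psi | split; [apply Lrel_x_psi |]].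
    intros x Hx. apply M_psi; (assumption || lra).
  - exists (tri_xi (- al - be - nu1 - nu2) be (nu2 - 1) al (INR n)),
      (tri_eta (- al - be - nu1 - nu2) be (nu2 - 1) al (INR n)),
      (tri_zeta (- al - be - nu1 - nu2) be (nu2 - 1) al (INR n)), (L_psi al be nu1 nu2 n).
    split; [apply Lrel_psi|]. intros x Hx.
    rewrite L_psi_tridiag, pow_sum_jacobi_coef_pred by (assumption || lra).
    destruct n; ring.
Qed.
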